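(* Let $E$ be a finite-dimensional real Euclidean space with inner product $\langle\cdot,\cdot\rangle$, let $\|\cdot\|_{(1)},\dots,\|\cdot\|_{(n)}$ be norms on $E$, and let $\alpha_1,\dots,\alpha_n\ge 0$, not all zero. For each $i$ let $\mathrm{LMO}_i$ be a linear minimization oracle for the unit ball of $\|\cdot\|_{(i)}$, i.e. $\mathrm{LMO}_i(\mathbf{M})\in\arg\min_{\|\mathbf{D}\|_{(i)}\le 1}\langle\mathbf{M},\mathbf{D}\rangle$ for every $\mathbf{M}\in E$. Let $\|\cdot\|$ be the norm dual to the norm $\sum_{i=1}^n\alpha_i\|\cdot\|_{(i)}^\dagger$. Then for every $\mathbf{M}\in E$, $$\sum_{i=1}^n\alpha_i\,\mathrm{LMO}_i(\mathbf{M})\in\arg\min_{\|\mathbf{D}\|\le 1}\langle\mathbf{M},\mathbf{D}\rangle,$$ i.e. $\sum_{i=1}^n\alpha_i\mathrm{LMO}_i$ is a linear minimization oracle for the unit ball of $\|\cdot\|$.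
   Context: For a norm $\|\cdot\|$ on $E$, its dual norm is $\|\mathbf{M}\|^\dagger=\sup_{\|\mathbf{D}\|\le1}\langle\mathbf{M},\mathbf{D}\rangle$. *)

From HB Require Import structures.
From mathcomp Require Import all_boot all_order all_algebra.
From mathcomp Require Import classical_sets reals.
Set Implicit Arguments. Unset Strict Implicit. Unset Printing Implicit Defensive.
Import Order.TTheory GRing.Theory Num.Theory.
Local Open Scope ring_scope.
Local Open Scope classical_set_scope.

(* The Euclidean space E is modelled as R^m = 'rV[R]_m with the standard
   inner product (every finite-dimensional real Euclidean space is
   isometrically isomorphic to this). *)
Definition inner (R : realType) (m : nat) (u v : 'rV[R]_m) : R :=
  \sum_(j < m) u 0 j * v 0 j.

Definition is_norm (R : realType) (m : nat) (N : 'rV[R]_m -> R) : Prop :=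
  [/\ forall x, 0 <= N x,
      forall x, N x = 0 -> x = 0,
      forall (a : R) x, N (a *: x) = `|a| * N x
    & forall x y, N (x + y) <= N x + N y].

Definition dual_norm (R : realType) (m : nat) (N : 'rV[R]_m -> R)
  (M : 'rV[R]_m) : R :=
  sup [set inner M D | D in [set D | N D <= 1]].

Definition in_argmin_ball (R : realType) (m : nat) (N : 'rV[R]_m -> R)
  (M X : 'rV[R]_m) : Prop :=
  N X <= 1 /\ forall D, N D <= 1 -> inner M X <= inner M D.

Definition is_LMO (R : realType) (m : nat) (N : 'rV[R]_m -> R)
  (lmo : 'rV[R]_m -> 'rV[R]_m) : Prop :=
  forall M, in_argmin_ball N M (lmo M).

(* For a norm [N] with linear minimization oracle [L], the dual norm is
   attained at [-L M], so [N^dagger M = - <M, L M>].  Hence the weighted sum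
   [W := \sum_i alpha_i N_i^dagger] satisfies [W M = - <M, X>] for
   [X := \sum_i alpha_i L_i M], while [<X, E> <= W E] termwise, so [X] lies in
   the unit ball of the dual [W^dagger].  Conversely, the Hoelder inequality
   [<D, E> <= W^dagger D * W E] with [E = -M] gives [<M, D> >= - W M = <M, X>]
   whenever [W^dagger D <= 1]. *)
From HB Require Import structures.
From mathcomp Require Import all_boot all_order all_algebra.
From mathcomp Require Import classical_sets reals.
Import Order.TTheory GRing.Theory Num.Theory.
Local Open Scope ring_scope.
Local Open Scope classical_set_scope.
Set Implicit Arguments.
Unset Strict Implicit.

Section Inner.
Variables (R : realType) (m : nat).
Implicit Types (a : R) (u v : 'rV[R]_m).

Lemma innerC u v : inner u v = inner v u.
Proof. by apply: eq_bigr => j _; rewrite mulrC. Qed.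

Lemma innerZr a u v : inner u (a *: v) = a * inner u v.
Proof. by rewrite /inner mulr_sumr; apply: eq_bigr => j _; rewrite mxE mulrCA. Qed.

Lemma innerZl a u v : inner (a *: u) v = a * inner u v.
Proof. by rewrite innerC innerZr innerC. Qed.

Lemma innerNr u v : inner u (- v) = - inner u v.
Proof. by rewrite -scaleN1r innerZr mulN1r. Qed.

Lemma innerNl u v : inner (- u) v = - inner u v.
Proof. by rewrite innerC innerNr innerC. Qed.

Lemma inner0r u : inner u 0 = 0.
Proof. by rewrite -(scale0r 0) innerZr mul0r. Qed.

Lemma inner_sumr (I : finType) (F : I -> 'rV[R]_m) u :
  inner u (\sum_i F i) = \sum_i inner u (F i).
Proof.
rewrite /inner exchange_big /=; apply: eq_bigr => j _.
by rewrite summxE mulr_sumr.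
Qed.

End Inner.

Section DualNorm.
Variables (R : realType) (m : nat) (P : 'rV[R]_m -> R).
Implicit Types (c : R) (D E : 'rV[R]_m).

Definition dual_bounded D := has_ubound [set inner D E | E in [set E | P E <= 1]].

Lemma le_dual_norm D E : dual_bounded D -> P E <= 1 -> inner D E <= dual_norm P D.
Proof. by move=> bD PE; apply: ub_le_sup => //; exists E. Qed.

Lemma dual_norm_le D E0 c : P E0 <= 1 ->
  (forall E, P E <= 1 -> inner D E <= c) -> dual_norm P D <= c.
Proof.
move=> PE0 ub; apply: ge_sup; first by exists (inner D E0), E0.
by move=> _ [E PE <-]; apply: ub.
Qed.

Lemma dual_normN D : (forall E, P (- E) = P E) -> dual_norm P (- D) = dual_norm P D.
Proof.
move=> PN; rewrite /dual_norm; congr sup; apply/seteqP; split=> _ [E PE <-];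
  by exists (- E); rewrite /= ?PN // innerNl innerNr ?opprK.
Qed.

Hypothesis P_ge0 : forall E, 0 <= P E.
Hypothesis PZ : forall a E, P (a *: E) = `|a| * P E.

Lemma inner_le_dual_norm_mul D E : dual_bounded D -> inner D E <= dual_norm P D * P E.
Proof.
move=> bD; have := P_ge0 E; rewrite le_eqVlt => /predU1P[PE0 | PE_gt0].
  rewrite -PE0 mulr0 leNgt; apply/negP => DE_gt0.
  set s := dual_norm P D; set t := (`|s| + 1) / inner D E.
  (* [P E = 0] puts the whole line through [E] in the unit ball, forcing [<D, E> <= 0]. *)
  have PtE : P (t *: E) <= 1 by rewrite PZ -PE0 mulr0 ler01.
  have := le_dual_norm bD PtE; rewrite innerZr divfK ?gt_eqF //.
  by apply/negP; rewrite -ltNge (le_lt_trans (ler_norm s)) // ltrDl.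
rewrite -ler_pdivrMr // mulrC -innerZr; apply: le_dual_norm => //.
by rewrite PZ ger0_norm ?invr_ge0 ?P_ge0 // mulVf ?gt_eqF.
Qed.

End DualNorm.

Section NormWithLMO.
Variables (R : realType) (m : nat) (N : 'rV[R]_m -> R) (L : 'rV[R]_m -> 'rV[R]_m).
Hypothesis N_norm : is_norm N.
Hypothesis L_lmo : is_LMO N L.
Implicit Types (a : R) (D E M : 'rV[R]_m).

Lemma normZ a E : N (a *: E) = `|a| * N E.
Proof. by case: N_norm. Qed.

Lemma norm_ge0 E : 0 <= N E.
Proof. by case: N_norm. Qed.

Lemma norm0 : N 0 = 0.
Proof. by rewrite -(scale0r 0) normZ normr0 mul0r. Qed.

Lemma normN E : N (- E) = N E.
Proof. by rewrite -scaleN1r normZ normrN normr1 mul1r. Qed.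

Lemma lmo_le1 M : N (L M) <= 1.
Proof. by case: (L_lmo M). Qed.

Lemma inner_le_lmo M E : N E <= 1 -> inner M E <= - inner M (L M).
Proof.
move=> NE; case: (L_lmo M) => _ /(_ (- E)).
by rewrite normN innerNr lerNr => /(_ NE).
Qed.

Lemma dual_bounded_norm M : dual_bounded N M.
Proof. by exists (- inner M (L M)) => _ [E NE <-]; apply: inner_le_lmo. Qed.

Lemma dual_norm_lmo M : dual_norm N M = - inner M (L M).
Proof.
apply/le_anti/andP; split; first exact: dual_norm_le (lmo_le1 M) (inner_le_lmo M).
by rewrite -innerNr; apply: le_dual_norm (dual_bounded_norm M) _; rewrite normN lmo_le1.
Qed.

Lemma dual_norm_ge0 M : 0 <= dual_norm N M.
Proof.
by rewrite -(inner0r M); apply: le_dual_norm (dual_bounded_norm M) _; rewrite norm0.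
Qed.

Lemma dual_normZ a M : dual_norm N (a *: M) = `|a| * dual_norm N M.
Proof.
wlog a_ge0 : a M / 0 <= a => [wlog_a | ].
  have [/wlog_a // | a_lt0] := leP 0 a.
  rewrite -[a]opprK scaleNr -scalerN wlog_a ?oppr_ge0 ?ltW // normrN.
  by rewrite opprK (dual_normN M normN).
rewrite ger0_norm //; apply/le_anti/andP; split.
  apply: dual_norm_le (lmo_le1 M) _ => E NE.
  by rewrite innerZl ler_wpM2l //; apply: le_dual_norm (dual_bounded_norm M) NE.
rewrite (dual_norm_lmo M) mulrN -innerZl -innerNr.
by apply: le_dual_norm (dual_bounded_norm _) _; rewrite normN lmo_le1.
Qed.

End NormWithLMO.

Definition weighted_dual_norm (R : realType) (m n : nat) (alpha : 'I_n -> R)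
  (N : 'I_n -> 'rV[R]_m -> R) (M : 'rV[R]_m) : R :=
  \sum_(i < n) alpha i * dual_norm (N i) M.

Section WeightedDualNorm.
Variables (R : realType) (m n : nat).
Variables (N : 'I_n -> 'rV[R]_m -> R) (L : 'I_n -> 'rV[R]_m -> 'rV[R]_m).
Variable alpha : 'I_n -> R.
Hypothesis N_norm : forall i, is_norm (N i).
Hypothesis L_lmo : forall i, is_LMO (N i) (L i).
Hypothesis alpha_ge0 : forall i, 0 <= alpha i.
Implicit Types (a : R) (D E M : 'rV[R]_m).

Local Notation W := (weighted_dual_norm alpha N).
Local Notation X M := (\sum_(i < n) alpha i *: L i M).

Lemma weighted_dual_norm_term_le i E : alpha i * dual_norm (N i) E <= W E.
Proof.
rewrite /weighted_dual_norm (bigD1 i) //= lerDl; apply: sumr_ge0 => j _.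
by rewrite mulr_ge0 ?(dual_norm_ge0 (N_norm j) (L_lmo j)).
Qed.

Lemma weighted_dual_norm_ge0 E : 0 <= W E.
Proof. by apply: sumr_ge0 => i _; rewrite mulr_ge0 ?(dual_norm_ge0 (N_norm i) (L_lmo i)). Qed.

Lemma weighted_dual_normZ a E : W (a *: E) = `|a| * W E.
Proof.
rewrite /weighted_dual_norm mulr_sumr; apply: eq_bigr => i _.
by rewrite (dual_normZ (N_norm i) (L_lmo i)) mulrCA.
Qed.

Lemma weighted_dual_norm0 : W 0 = 0.
Proof. by rewrite -(scale0r 0) weighted_dual_normZ normr0 mul0r. Qed.

Lemma weighted_dual_normN E : W (- E) = W E.
Proof. by rewrite -scaleN1r weighted_dual_normZ normrN normr1 mul1r. Qed.

Lemma dual_bounded_weighted k D : 0 < alpha k -> dual_bounded W D.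
Proof.
move=> alpha_k_gt0; exists (N k D / alpha k) => _ [E WE <-].
have := inner_le_dual_norm_mul (norm_ge0 (N_norm k)) (normZ (N_norm k)) D
  (dual_bounded_norm (N_norm k) (L_lmo k) E).
rewrite innerC => /le_trans; apply; rewrite mulrC ler_wpM2l ?(norm_ge0 (N_norm k)) //.
rewrite -(ler_pM2l alpha_k_gt0) mulfV ?gt_eqF //.
exact: le_trans (weighted_dual_norm_term_le k E) WE.
Qed.

Lemma inner_weighted_lmo M : inner M (X M) = - W M.
Proof.
rewrite inner_sumr /weighted_dual_norm -sumrN; apply: eq_bigr => i _.
by rewrite innerZr (dual_norm_lmo (N_norm i) (L_lmo i)) mulrN opprK.
Qed.

Lemma inner_weighted_lmo_le M E : inner (X M) E <= W E.
Proof.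
rewrite innerC inner_sumr; apply: ler_sum => i _; rewrite innerZr ler_wpM2l //.
exact: le_dual_norm (dual_bounded_norm (N_norm i) (L_lmo i) E) (lmo_le1 (L_lmo i) M).
Qed.

Lemma dual_weighted_lmo_le1 M : dual_norm W (X M) <= 1.
Proof.
apply: (dual_norm_le (E0 := 0)) => [|E WE]; first by rewrite weighted_dual_norm0.
exact: le_trans (inner_weighted_lmo_le M E) WE.
Qed.

Lemma inner_weighted_lmo_min k M D : 0 < alpha k -> dual_norm W D <= 1 ->
  inner M (X M) <= inner M D.
Proof.
move=> alpha_k_gt0 WD; rewrite inner_weighted_lmo innerC lerNl -innerNr.
have := inner_le_dual_norm_mul weighted_dual_norm_ge0 weighted_dual_normZ (- M)
  (dual_bounded_weighted D alpha_k_gt0).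
by move/le_trans; apply; rewrite weighted_dual_normN ler_piMl ?weighted_dual_norm_ge0.
Qed.

End WeightedDualNorm.

Theorem lemma4 (R : realType) (m n : nat)
  (N : 'I_n -> 'rV[R]_m -> R) (alpha : 'I_n -> R)
  (lmo : 'I_n -> 'rV[R]_m -> 'rV[R]_m) :
  (forall i, is_norm (N i)) ->
  (forall i, 0 <= alpha i) ->
  (exists i, alpha i != 0) ->
  (forall i, is_LMO (N i) (lmo i)) ->
  let Nsum := fun M : 'rV[R]_m => \sum_(i < n) alpha i * dual_norm (N i) M in
  let Nstar := dual_norm Nsum in
  forall M : 'rV[R]_m,
    in_argmin_ball Nstar M (\sum_(i < n) alpha i *: lmo i M).
Proof.
move=> N_norm alpha_ge0 [k alpha_k_neq0] L_lmo Nsum Nstar M.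
rewrite /Nstar /Nsum -/(weighted_dual_norm alpha N).
have alpha_k_gt0 : 0 < alpha k by rewrite lt_def alpha_k_neq0 alpha_ge0.
split; first exact: dual_weighted_lmo_le1 N_norm L_lmo alpha_ge0 M.
by move=> D; apply: (inner_weighted_lmo_min N_norm L_lmo alpha_ge0 M alpha_k_gt0).
Qed.
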